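(* Let $|\psi\rangle$ be a single-mode state of coherent rank $k$. Then for small real $\epsilon$, $$\hat a^\dagger|\psi\rangle=\frac1\epsilon(\mathbb I\otimes\langle0|)\,\hat B(2\epsilon,0)\,|\psi,1\rangle+O(\epsilon^2),$$ where the second mode is an auxiliary mode prepared in the Fock state $|1\rangle$ and projected onto the vacuum $|0\rangle$. Consequently $\hat a^\dagger$ can be implemented on $|\psi\rangle$ to arbitrary accuracy, the result having approximate coherent rank $2k$.
   Context: Two modes with annihilation operators $\hat a$ (system) and $\hat b$ (auxiliary); Fock states $|n\rangle$. The beamsplitter unitary is $\hat B(\theta,\phi)=e^{\frac\theta2(\hat a^\dagger\hat b e^{i\phi}-\hat a\hat b^\dagger e^{-i\phi})}$, so $\hat B(2\epsilon,0)=e^{\epsilon(\hat a^\dagger\hat b-\hat a\hat b^\dagger)}$. Coherent state $|\alpha\rangle=e^{-|\alpha|^2/2}\sum_n\frac{\alpha^n}{\sqrt{n!}}|n\rangle$. A state has coherent rank $k$ if it is a superposition of $k$ (product) coherent states; its approximate coherent rank is the smallest $k$ such that for every $\delta>0$ there is a coherent rank $k$ state with fidelity (after normalization) greater than $1-\delta$ to it. *)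

From mathcomp Require Import all_boot all_order all_algebra.
From mathcomp Require Import all_classical all_reals all_analysis.
From mathcomp Require Export complex.
Set Implicit Arguments. Unset Strict Implicit. Unset Printing Implicit Defensive.
Import Order.TTheory GRing.Theory Num.Theory.
Local Open Scope ring_scope.
Local Open Scope complex_scope.

Section QuantumOptics.
Variable R : realType.
Local Notation C := R[i].

Definition sqmod (z : C) : R := (complex.Re z) ^+ 2 + (complex.Im z) ^+ 2.

(* A single-mode (unnormalized) vector is given by its Fock coefficients
   psi n = <n|psi>;  a two-mode vector by Phi m n = <m,n|Phi>
   (first index: system mode a, second index: auxiliary mode b). *)

Definition coherent (alpha : C) (n : nat) : C :=
  (expR (- (sqmod alpha / 2)))%:C * alpha ^+ n / (Num.sqrt (n`!%:R : R))%:C.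

Definition has_coherent_rank (k : nat) (psi : nat -> C) : Prop :=
  exists (c alpha : 'I_k -> C),
    forall n, psi n = \sum_(i < k) c i * coherent (alpha i) n.

(* creation operator a^dagger |m> = sqrt(m+1) |m+1> *)
Definition adag (psi : nat -> C) (n : nat) : C :=
  if n is m.+1 then (Num.sqrt (n%:R : R))%:C * psi m else 0.

(* The generator a^dagger b - a b^dagger preserves the total photon number N.
   On the block of total number N, with basis |i, N-i> (i = 0..N), its
   (real) matrix is: *)
Definition bs_gen (N : nat) : 'M[R]_N.+1 :=
  \matrix_(i < N.+1, j < N.+1)
    (if i == j.+1 :> nat then Num.sqrt ((i * (N - j))%:R : R)       (* a^dag b *)
     else if j == i.+1 :> nat then - Num.sqrt ((j * (N - i))%:R : R) (* - a b^dag *)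
     else 0).

Definition bs_block (theta : R) {N : nat} (i j : 'I_N.+1) : R :=
  \big[+%R/0%R]_(0 <= k <oo) ((theta / 2) ^+ k / (k`!%:R) * ((bs_gen N) ^+ k) i j).

(* Beamsplitter B(theta, 0) = exp( theta/2 (a^dag b - a b^dag) ), acting
   block-diagonally on the total-photon-number blocks. *)
Definition beamsplitter (theta : R) (Phi : nat -> nat -> C) (m n : nat) : C :=
  let N := (m + n)%N in
  \sum_(j < N.+1) (bs_block theta (@inord N m) j)%:C * Phi (val j) (N - val j)%N.

Definition tensor_fock1 (psi : nat -> C) (m n : nat) : C :=
  if n == 1%N then psi m else 0.

Definition proj_aux_vac (Phi : nat -> nat -> C) (m : nat) : C := Phi m 0%N.

Definition inner_re (phi chi : nat -> C) : R :=
  \big[+%R/0%R]_(0 <= n <oo) (complex.Re (phi n) * complex.Re (chi n)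
                     + complex.Im (phi n) * complex.Im (chi n)).
Definition inner_im (phi chi : nat -> C) : R :=
  \big[+%R/0%R]_(0 <= n <oo) (complex.Re (phi n) * complex.Im (chi n)
                     - complex.Im (phi n) * complex.Re (chi n)).
Definition sqnorm (phi : nat -> C) : R := \big[+%R/0%R]_(0 <= n <oo) sqmod (phi n).

Definition fidelity (phi chi : nat -> C) : R :=
  (inner_re phi chi ^+ 2 + inner_im phi chi ^+ 2) / (sqnorm phi * sqnorm chi).

(* "approximate coherent rank <= r": for every delta > 0 there is a state of
   coherent rank r with fidelity > 1 - delta.  The approximate coherent rank is
   the least r with this property. *)
Definition approx_coherent_rank_le (r : nat) (phi : nat -> C) : Prop :=
  forall delta : R, 0 < delta ->
    exists chi, has_coherent_rank r chi /\ 1 - delta < fidelity phi chi.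

End QuantumOptics.

(* The beamsplitter preserves the total photon number, so projecting the
   auxiliary mode of B(2e,0)|psi,1> onto |0> leaves b_m psi_m at |m+1>, where
   b_m is the (m+1, m) entry of exp(e G_(m+1)).  In the exponential series the
   k = 0 and k = 2 terms vanish by parity, the k = 1 term is e sqrt(m+1) and the
   tail is O(e^3 exp(2(m+1))); after division by e this is a^dag psi up to
   O(e^2) coefficientwise, and the Gaussian decay of coherent-state
   coefficients makes the error square-summable.
   Next, a^dag |a> = exp(-|a|^2/2) d/da (exp(|a|^2/2) |a>), and
   exp(|a|^2/2) |a> = sum_n a^n / sqrt(n!) |n> is entire in a.  Replacing the
   derivative by a difference quotient of step t turns a^dag (sum_i c_i |a_i>)
   into a superposition of the 2k coherent states |a_i + t> and |a_i> which is
   O(t)-close in norm, and closeness in norm forces the fidelity towards 1. *)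

From mathcomp Require Import all_boot all_order all_algebra.
From mathcomp Require Import all_classical all_reals all_analysis.
From mathcomp Require Import complex.
From mathcomp Require Import ring lra zify.
Import Order.TTheory GRing.Theory Num.Theory.
Local Open Scope classical_set_scope.
Local Open Scope ring_scope.
Local Open Scope complex_scope.
Set Implicit Arguments. Unset Strict Implicit. Unset Printing Implicit Defensive.
Import numFieldNormedType.Exports.

Section ComplexModulus.
Variable R : realType.
Local Notation C := R[i].
Local Notation normc := (@Normc.normc R).

Lemma normc_ge0 (z : C) : 0 <= normc z.
Proof. by case: z => a b; exact: sqrtr_ge0. Qed.

Lemma sqmodE (z : C) : sqmod z = normc z ^+ 2.
Proof. by case: z => a b; rewrite /sqmod /= sqr_sqrtr // addr_ge0 // sqr_ge0. Qed.

Lemma sqmod_ge0 (z : C) : 0 <= sqmod z.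
Proof. by rewrite sqmodE sqr_ge0. Qed.

Lemma sqmod_gt0 (z : C) : z != 0 -> 0 < sqmod z.
Proof.
move=> z0; rewrite lt_def sqmod_ge0 andbT sqmodE sqrf_eq0.
by apply: contra z0 => /eqP/Normc.eq0_normc ->.
Qed.

Lemma normc_real (x : R) : normc x%:C = `|x|.
Proof. by rewrite /Normc.normc /= expr0n /= addr0 sqrtr_sqr. Qed.

Lemma normc_nat n : normc n%:R = n%:R.
Proof. by rewrite -(rmorph_nat (real_complex R)) normc_real ger0_norm. Qed.

Lemma normcX (z : C) n : normc (z ^+ n) = normc z ^+ n.
Proof.
elim: n => [|n IHn]; first by rewrite !expr0 Normc.normc1.
by rewrite !exprS Normc.normcM IHn.
Qed.

Lemma normc_sum_le (I : Type) (r : seq I) (P : pred I) (f : I -> C) :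
  normc (\sum_(i <- r | P i) f i) <= \sum_(i <- r | P i) normc (f i).
Proof.
elim/big_ind2 : _ => [|x y u v xu yv|//]; first by rewrite Normc.normc0.
exact: le_trans (le_normcD _ _) (lerD xu yv).
Qed.

Lemma sqmodN (z : C) : sqmod (- z) = sqmod z.
Proof. by case: z => a b; rewrite /sqmod /= !sqrrN. Qed.

Lemma sqmodD_le (x y : C) : sqmod (x + y) <= 2 * sqmod x + 2 * sqmod y.
Proof.
case: x y => [x1 x2] [y1 y2]; rewrite /sqmod /= -subr_ge0.
have : 0 <= (x1 - y1) ^+ 2 + (x2 - y2) ^+ 2 by rewrite addr_ge0 ?sqr_ge0.
by congr (_ <= _); ring.
Qed.

Lemma polarization_sqmod (x y : C) :
  complex.Re x * complex.Re y + complex.Im x * complex.Im y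
  = (sqmod x + sqmod y - sqmod (x - y)) / 2.
Proof. by case: x y => [x1 x2] [y1 y2]; rewrite /sqmod /=; field. Qed.

End ComplexModulus.

Lemma series_exp_coeff_le (R : realType) (x : R) n :
  0 <= x -> series (exp_coeff x) n <= expR x.
Proof.
move=> x0; apply: nondecreasing_cvgn_le; last exact: is_cvg_series_exp_coeff.
by apply: nondecreasing_series => k _ _; exact: exp_coeff_ge0.
Qed.

Lemma lim_dist_le (R : realType) (u : nat -> R) c B :
  cvgn u -> (\forall n \near \oo, `|u n - c| <= B) -> `|limn u - c| <= B.
Proof.
move=> cvu uB; have du : (fun n => `|u n - c|) @ \oo --> `|limn u - c|.
  by apply: cvg_norm; apply: cvgB => //; exact: cvg_cst.
by rewrite -(cvg_lim _ du) //; apply: limr_le => //; exact: cvgP du.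
Qed.

Lemma overlap_ratio_gt (R : realFieldType) (P Q rho e : R) :
  0 < e -> e <= 4^-1 -> 0 < P -> 0 <= rho -> rho <= e * P -> P <= 2 * Q + 2 * rho ->
  1 - 4 * e < ((P + Q - rho) / 2) ^+ 2 / (P * Q).
Proof.
move=> e0 e4 P0 rho0 rhoP PQ.
have Q4 : P <= 4 * Q by nra.
have Q0 : 0 < Q by lra.
rewrite ltr_pdivlMr ?mulr_gt0 //.
have cross : rho * (P + Q) <= 5 * e * (P * Q) by nra.
have ePQ : 0 < e * (P * Q) by rewrite !mulr_gt0.
have -> : ((P + Q - rho) / 2) ^+ 2
          = ((P - Q) ^+ 2 + 4 * (P * Q) - 2 * (rho * (P + Q)) + rho ^+ 2) / 4 by field.
have := sqr_ge0 (P - Q); have := sqr_ge0 rho; lra.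
Qed.

Lemma sumr_nat_eq (R : numDomainType) n a : \sum_(0 <= l < n) (l == a)%:R = (a < n)%:R :> R.
Proof.
elim: n => [|n IHn]; first by rewrite big_geq.
rewrite big_nat_recr //= IHn ltnS [(a <= n)%N]leq_eqVlt.
by case: ltngtP; rewrite ?addr0 ?add0r.
Qed.

Lemma sum_ord_eq_le (R : numDomainType) n a : \sum_(l < n) ((l : nat) == a)%:R <= 1 :> R.
Proof. by rewrite -(big_mkord xpredT (fun l => (l == a)%:R)) sumr_nat_eq lern1 leq_b1. Qed.

Section SquareSummable.
Variable R : realType.
Local Notation C := R[i].
Local Notation normc := (@Normc.normc R).

Definition sqsum (f : nat -> C) (M : nat) : R := \sum_(0 <= n < M) sqmod (f n).

(* The Fock coefficients of c exp(w^2/2) |w> dominate those of [f]. *)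
Definition coherent_dominated (c w : R) (f : nat -> C) : Prop :=
  forall n, normc (f n) <= c * w ^+ n / Num.sqrt (n`!%:R).

Lemma sqsum_nondecreasing (f : nat -> C) : {homo sqsum f : M N / (M <= N)%N >-> M <= N}.
Proof. by apply: nondecreasing_series => n _ _; exact: sqmod_ge0. Qed.

Lemma sqsum_le_sqnorm (f : nat -> C) M : cvgn (sqsum f) -> sqsum f M <= sqnorm f.
Proof. by move=> cvf; apply: nondecreasing_cvgn_le => //; exact: sqsum_nondecreasing. Qed.

Lemma sqsum_le_expR (f : nat -> C) c w : 0 <= c -> 0 <= w ->
  coherent_dominated c w f -> forall M, sqsum f M <= c ^+ 2 * expR (w ^+ 2).
Proof.
move=> c0 w0 fle M.
have term_le n : sqmod (f n) <= c ^+ 2 * exp_coeff (w ^+ 2) n.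
  have -> : c ^+ 2 * exp_coeff (w ^+ 2) n = (c * w ^+ n / Num.sqrt n`!%:R) ^+ 2.
    by rewrite /exp_coeff /= expr_div_n exprMn sqr_sqrtr ?ler0n //; ring.
  rewrite sqmodE lerXn2r ?nnegrE ?normc_ge0 ?fle //.
  by rewrite divr_ge0 ?sqrtr_ge0 ?mulr_ge0 ?exprn_ge0.
apply: le_trans (_ : c ^+ 2 * series (exp_coeff (w ^+ 2)) M <= _).
  by rewrite /series /= mulr_sumr; apply: ler_sum => n _; exact: term_le.
by rewrite ler_wpM2l ?sqr_ge0 // series_exp_coeff_le ?sqr_ge0.
Qed.

Lemma cvg_sqsum_expR (f : nat -> C) c w : 0 <= c -> 0 <= w ->
  coherent_dominated c w f -> cvgn (sqsum f) /\ sqnorm f <= c ^+ 2 * expR (w ^+ 2).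
Proof.
move=> c0 w0 /(sqsum_le_expR c0 w0) fle.
have cvf : cvgn (sqsum f).
  apply: nondecreasing_is_cvgn; first exact: sqsum_nondecreasing.
  by exists (c ^+ 2 * expR (w ^+ 2)) => _ [M _ <-].
by split=> //; apply: limr_le => //; exact: nearW.
Qed.

Lemma cvg_sqsumB (f g : nat -> C) :
  cvgn (sqsum f) -> cvgn (sqsum g) -> cvgn (sqsum (fun n => f n - g n)).
Proof.
move=> cvf cvg; apply: nondecreasing_is_cvgn; first exact: sqsum_nondecreasing.
exists (2 * sqnorm f + 2 * sqnorm g) => _ [M _ <-].
apply: le_trans (_ : 2 * sqsum f M + 2 * sqsum g M <= _); last first.
  by rewrite lerD // ler_wpM2l // sqsum_le_sqnorm.
rewrite /sqsum !mulr_sumr -big_split /=; apply: ler_sum => n _.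
by rewrite -(sqmodN (g n)); exact: sqmodD_le.
Qed.

Lemma inner_re_sqnorm (f g : nat -> C) :
  cvgn (sqsum f) -> cvgn (sqsum g) ->
  inner_re f g = (sqnorm f + sqnorm g - sqnorm (fun n => f n - g n)) / 2.
Proof.
move=> cvf cvg; have cvfg := cvg_sqsumB cvf cvg; rewrite /inner_re.
have -> : (fun M => \sum_(0 <= n < M) (complex.Re (f n) * complex.Re (g n)
                     + complex.Im (f n) * complex.Im (g n)))
        = (fun M => (sqsum f M + sqsum g M - sqsum (fun n => f n - g n) M) / 2).
  apply/funext => M; rewrite /sqsum -big_split -sumrB /= mulr_suml.
  by apply: eq_bigr => n _; rewrite polarization_sqmod.
by apply: cvg_lim => //; apply: cvgMl; apply: cvgB => //; exact: cvgD.
Qed.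

Lemma sqnorm_ge0 (f : nat -> C) : cvgn (sqsum f) -> 0 <= sqnorm f.
Proof. by move=> /(sqsum_le_sqnorm 0); rewrite /sqsum big_geq. Qed.

Lemma fidelity_gt (phi chi : nat -> C) e :
  0 < e -> e <= 4^-1 -> cvgn (sqsum phi) -> cvgn (sqsum (fun n => phi n - chi n)) ->
  0 < sqnorm phi -> sqnorm (fun n => phi n - chi n) <= e * sqnorm phi ->
  1 - 4 * e < fidelity phi chi.
Proof.
move=> e0 e4 cvphi cvd P0 dP.
have cvchi : cvgn (sqsum chi).
  have -> : chi = (fun n => phi n - (phi n - chi n)).
    by apply/funext => n; rewrite opprB addrC subrK.
  exact: cvg_sqsumB.
have PQ : sqnorm phi <= 2 * sqnorm chi + 2 * sqnorm (fun n => phi n - chi n).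
  apply: limr_le => //; apply: nearW => M.
  apply: le_trans (_ : 2 * sqsum chi M + 2 * sqsum (fun n => phi n - chi n) M <= _).
    rewrite /sqsum !mulr_sumr -big_split /=; apply: ler_sum => n _.
    by rewrite -{1}[phi n](subrK (chi n)) addrC; exact: sqmodD_le.
  by rewrite lerD // ler_wpM2l // sqsum_le_sqnorm.
rewrite /fidelity (inner_re_sqnorm cvphi cvchi).
apply: lt_le_trans (overlap_ratio_gt e0 e4 P0 (sqnorm_ge0 cvd) dP PQ) _.
by rewrite ler_wpM2r ?invr_ge0 ?mulr_ge0 ?sqnorm_ge0 // lerDl sqr_ge0.
Qed.

End SquareSummable.

Section BeamsplitterGenerator.
Variables (R : realType) (N : nat).
Local Notation G := (bs_gen R N).

Lemma bs_gen_neq0_odd (i j : 'I_N.+1) : G i j != 0 -> odd (i + j).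
Proof.
rewrite mxE; have [->|_] := eqVneq (i : nat) j.+1.
  by rewrite addSn /= addnn odd_double.
have [->|_] := eqVneq (j : nat) i.+1; last by rewrite eqxx.
by rewrite addnS /= addnn odd_double.
Qed.

Lemma bs_gen_expr_odd k (i j : 'I_N.+1) : odd (i + j + k) -> (G ^+ k) i j = 0.
Proof.
elim: k i j => [|k IHk] i j.
  by rewrite addn0 expr0 mxE; case: eqP => [->|]; rewrite ?addnn ?odd_double.
move=> ijk_odd; rewrite exprSr -mulmxE mxE big1 // => l _.
have [->|/bs_gen_neq0_odd lj_odd] := eqVneq (G l j) 0; first by rewrite mulr0.
rewrite IHk ?mul0r //; move: lj_odd ijk_odd; rewrite !oddD /=.
by case: (odd i); case: (odd j); case: (odd k); case: (odd l).
Qed.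

Lemma bs_gen_le (i j : 'I_N.+1) :
  `|G i j| <= N%:R * ((i : nat) == j.+1)%:R + N%:R * ((i : nat) == j.-1)%:R.
Proof.
have sqrt_le (a b : nat) : (a <= N)%N -> (b <= N)%N -> Num.sqrt ((a * b)%:R : R) <= N%:R.
  move=> aN bN; rewrite -(ger0_norm (ler0n R N)) -sqrtr_sqr ler_sqrt ?sqr_ge0 //.
  by rewrite -natrX ler_nat leq_mul.
rewrite mxE; have [ij|_] := eqVneq (i : nat) j.+1.
  rewrite ij ger0_norm ?sqrtr_ge0 // mulr1 (le_trans (sqrt_le _ _ _ _)) ?leq_subr //.
    by rewrite -ltnS -ij ltn_ord.
  by rewrite lerDl mulr_ge0.
have [ji|_] := eqVneq (j : nat) i.+1; last by rewrite normr0 addr_ge0 ?mulr_ge0.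
rewrite normrN ger0_norm ?sqrtr_ge0 // ji /= eqxx mulr1.
rewrite (le_trans (sqrt_le _ _ _ _)) ?leq_subr //.
  by rewrite -ltnS -ji ltn_ord.
by rewrite lerDr mulr_ge0.
Qed.

Lemma bs_gen_col_sum_le (j : 'I_N.+1) : \sum_(i < N.+1) `|G i j| <= 2 * N%:R.
Proof.
apply: le_trans (ler_sum _ (fun i _ => bs_gen_le i j)) _.
rewrite big_split /= -!mulr_sumr mulr2n mulrDl mul1r.
by apply: lerD; rewrite ler_piMr // sum_ord_eq_le.
Qed.

Lemma bs_gen_expr_le k (i j : 'I_N.+1) : `|(G ^+ k) i j| <= (2 * N%:R) ^+ k.
Proof.
elim: k i j => [|k IHk] i j.
  by rewrite expr0 mxE; case: eqP; rewrite ?normr1 ?normr0 ?ler01.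
rewrite exprSr -mulmxE mxE exprSr; apply: le_trans (ler_norm_sum _ _ _) _.
apply: le_trans (_ : \sum_(l < N.+1) (2 * N%:R) ^+ k * `|G l j| <= _).
  by apply: ler_sum => l _; rewrite normrM ler_wpM2r.
by rewrite -mulr_sumr ler_wpM2l ?exprn_ge0 ?mulr_ge0 // bs_gen_col_sum_le.
Qed.

End BeamsplitterGenerator.

Section BeamsplitterBlock.
Variable R : realType.

Lemma bs_block_term_le (x : R) N (i j : 'I_N.+1) k :
  `|x ^+ k / k`!%:R * (bs_gen R N ^+ k) i j| <= exp_coeff (`|x| * (2 * N%:R)) k.
Proof.
rewrite /exp_coeff /= normrM normf_div normrX [`|k`!%:R|]ger0_norm // exprMn mulrAC.
by rewrite ler_wpM2r ?invr_ge0 // ler_wpM2l ?exprn_ge0 // bs_gen_expr_le.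
Qed.

Lemma cvg_bs_block_series (x : R) N (i j : 'I_N.+1) :
  cvgn (fun n => \sum_(0 <= k < n) x ^+ k / k`!%:R * (bs_gen R N ^+ k) i j).
Proof.
apply: normed_cvg; apply: (series_le_cvg _ _ (bs_block_term_le x i j)).
- by move=> k; rewrite normr_ge0.
- by move=> k; rewrite exp_coeff_ge0 // mulr_ge0.
- exact: is_cvg_series_exp_coeff.
Qed.

Lemma bs_block_sub_term_le (eps : R) m k : `|eps| <= 1 ->
  `|eps ^+ k / k`!%:R * (bs_gen R m.+1 ^+ k) (inord m.+1) (inord m)
    - (k == 1)%:R * (eps * Num.sqrt m.+1%:R)|
  <= `|eps| ^+ 3 * exp_coeff (2 * m.+1%:R) k.
Proof.
move=> eps1; set i : 'I_m.+2 := inord m.+1; set j : 'I_m.+2 := inord m.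
have iE : (i : nat) = m.+1 by rewrite inordK.
have jE : (j : nat) = m by rewrite inordK // ltnW.
have rhs_ge0 l : 0 <= `|eps| ^+ 3 * exp_coeff (2 * m.+1%:R) l.
  by rewrite mulr_ge0 ?exprn_ge0 // exp_coeff_ge0 // mulr_ge0.
have [->|k1] := eqVneq k 1%N.
  by rewrite expr1 mxE iE jE eqxx subSnn muln1 -[1`!]/1%N divr1 mul1r subrr normr0.
rewrite mul0r subr0.
case: k k1 => [|[|[|k]]] // _.
- by rewrite expr0 mxE -val_eqE /= iE jE gtn_eqF // mulr0 normr0.
- rewrite bs_gen_expr_odd ?mulr0 ?normr0 //.
  by rewrite iE jE addSn addnn addn2 !oddS odd_double.
apply: le_trans (_ : exp_coeff (`|eps| * (2 * m.+1%:R)) k.+3 <= _).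
  exact: bs_block_term_le.
rewrite /exp_coeff /= exprMn -mulrA ler_wpM2r ?divr_ge0 ?exprn_ge0 ?mulr_ge0 //.
by apply: ler_wiXn2l.
Qed.

Lemma bs_block_sub_le (eps : R) m : `|eps| <= 1 ->
  `|bs_block (2 * eps) (inord m.+1 : 'I_m.+2) (inord m) - eps * Num.sqrt m.+1%:R|
    <= `|eps| ^+ 3 * expR (2 * m.+1%:R).
Proof.
move=> eps1; set u := fun n => \sum_(0 <= k < n)
  eps ^+ k / k`!%:R * (bs_gen R m.+1 ^+ k) (inord m.+1) (inord m).
have -> : bs_block (2 * eps) (inord m.+1 : 'I_m.+2) (inord m) = limn u.
  by rewrite /bs_block [2 * eps]mulrC mulfK ?pnatr_eq0.
apply: (@lim_dist_le R u); first exact: cvg_bs_block_series.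
exists 2%N => // n /= n2.
have -> : eps * Num.sqrt m.+1%:R
    = \sum_(0 <= k < n) (k == 1)%:R * (eps * Num.sqrt m.+1%:R).
  by rewrite -mulr_suml sumr_nat_eq n2 mul1r.
rewrite -sumrB; apply: le_trans (ler_norm_sum _ _ _) _.
apply: le_trans (_ : \sum_(0 <= k < n) `|eps| ^+ 3 * exp_coeff (2 * m.+1%:R) k <= _).
  by apply: ler_sum => k _; exact: bs_block_sub_term_le.
by rewrite -mulr_sumr ler_wpM2l ?exprn_ge0 // series_exp_coeff_le ?mulr_ge0.
Qed.

End BeamsplitterBlock.

Section CoherentSuperposition.
Variable R : realType.
Local Notation C := R[i].
Local Notation normc := (@Normc.normc R).

Lemma normc_coherent_le (a : C) n : normc (coherent a n) <= normc a ^+ n / Num.sqrt n`!%:R.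
Proof.
rewrite /coherent !Normc.normcM Normc.normcV !normc_real normcX.
rewrite (ger0_norm (sqrtr_ge0 _)) ger0_norm ?expR_ge0 // ler_wpM2r ?invr_ge0 ?sqrtr_ge0 //.
by rewrite ler_piMl ?exprn_ge0 ?normc_ge0 // expR_le1 oppr_le0 divr_ge0 ?sqmod_ge0.
Qed.

Definition coherent_weight k (c : 'I_k -> C) : R := \sum_i normc (c i).
Definition coherent_radius k (a : 'I_k -> C) : R := 1 + \sum_i normc (a i).

Lemma coherent_weight_ge0 k (c : 'I_k -> C) : 0 <= coherent_weight c.
Proof. by apply: sumr_ge0 => i _; exact: normc_ge0. Qed.

Lemma coherent_radius_ge0 k (a : 'I_k -> C) : 0 <= coherent_radius a.
Proof. by rewrite addr_ge0 // sumr_ge0 // => i _; exact: normc_ge0. Qed.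

Lemma normc_add1_le_radius k (a : 'I_k -> C) i : normc (a i) + 1 <= coherent_radius a.
Proof.
rewrite addrC lerD2l (bigD1 i) //= lerDl.
by apply: sumr_ge0 => j _; exact: normc_ge0.
Qed.

Lemma coherent_dominated_superposition k (c a : 'I_k -> C) (psi : nat -> C) :
  (forall n, psi n = \sum_(i < k) c i * coherent (a i) n) ->
  coherent_dominated (coherent_weight c) (coherent_radius a) psi.
Proof.
move=> psiE n; rewrite psiE; apply: le_trans (normc_sum_le _ _ _) _.
rewrite /coherent_weight !mulr_suml; apply: ler_sum => i _.
rewrite Normc.normcM -mulrA ler_wpM2l ?normc_ge0 //.
apply: le_trans (normc_coherent_le _ _) _.
rewrite ler_wpM2r ?invr_ge0 ?sqrtr_ge0 // lerXn2r ?nnegrE ?normc_ge0 ?coherent_radius_ge0 //.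
by apply: le_trans (normc_add1_le_radius a i); rewrite lerDl.
Qed.

End CoherentSuperposition.

Section BeamsplitterApprox.
Variable R : realType.
Local Notation C := R[i].
Local Notation normc := (@Normc.normc R).

Lemma proj_bs_fock1_0 (psi : nat -> C) theta :
  proj_aux_vac (beamsplitter theta (tensor_fock1 psi)) 0 = 0.
Proof. by rewrite /proj_aux_vac /beamsplitter big_ord1 /tensor_fock1 mulr0. Qed.

Lemma proj_bs_fock1_S (psi : nat -> C) theta m :
  proj_aux_vac (beamsplitter theta (tensor_fock1 psi)) m.+1 =
  (bs_block theta (inord m.+1 : 'I_m.+2) (inord m))%:C * psi m.
Proof.
rewrite /proj_aux_vac /beamsplitter addn0 big_ord_recr big_ord_recr /=.
rewrite big1 ?add0r => [|j _]; last first.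
  by rewrite /tensor_fock1 (_ : (m.+1 - j == 1)%N = false) ?mulr0 //; have := ltn_ord j; lia.
rewrite /tensor_fock1 subnn mulr0 addr0 subSnn eqxx.
by congr (_%:C * _); congr bs_block; apply/val_inj; rewrite /= inordK.
Qed.

Lemma adag_sub_proj_bs_S (psi : nat -> C) (eps : R) m : eps != 0 -> `|eps| <= 1 ->
  normc (adag psi m.+1
         - (eps^-1)%:C * proj_aux_vac (beamsplitter (2 * eps) (tensor_fock1 psi)) m.+1)
    <= eps ^+ 2 * expR (2 * m.+1%:R) * normc (psi m).
Proof.
move=> eps0 eps1; rewrite proj_bs_fock1_S /adag.
set b := bs_block _ _ _.
have -> : (Num.sqrt m.+1%:R)%:C * psi m - (eps^-1)%:C * (b%:C * psi m)
          = (- (eps^-1 * (b - eps * Num.sqrt m.+1%:R)))%:C * psi m.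
  by rewrite mulrA -mulrBl -rmorphM -rmorphB; congr (_%:C * _); field.
rewrite Normc.normcM normc_real normrN normrM normfV ler_wpM2r ?normc_ge0 //.
have -> : eps ^+ 2 * expR (2 * m.+1%:R) = `|eps|^-1 * (`|eps| ^+ 3 * expR (2 * m.+1%:R)).
  by rewrite -[eps ^+ 2]real_normK ?num_real //; field; rewrite normr_eq0.
by rewrite ler_wpM2l ?invr_ge0 // bs_block_sub_le.
Qed.

Lemma adag_beamsplitter_approx k (psi : nat -> C) : has_coherent_rank k psi ->
  exists (K d : R), 0 < d /\
    forall eps : R, eps != 0 -> `|eps| < d ->
      forall M : nat,
        \sum_(n < M)
           sqmod (adag psi n
                  - (eps^-1)%:C * proj_aux_vac (beamsplitter (2 * eps) (tensor_fock1 psi)) n)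
        <= (K * eps ^+ 2) ^+ 2.
Proof.
move=> [c [a psiE]].
set W := coherent_weight c; set w := expR 2 * coherent_radius a.
have W0 : 0 <= W := coherent_weight_ge0 c.
have w0 : 0 <= w by rewrite mulr_ge0 ?expR_ge0 ?coherent_radius_ge0.
exists (expR 2 * W * expR (w ^+ 2)), 1; split=> // eps eps0 eps1 M.
set err := fun n => adag psi n
  - (eps^-1)%:C * proj_aux_vac (beamsplitter (2 * eps) (tensor_fock1 psi)) n.
have errS : coherent_dominated (eps ^+ 2 * expR 2 * W) w (fun m => err m.+1).
  move=> m; apply: le_trans (adag_sub_proj_bs_S psi m eps0 (ltW eps1)) _.
  rewrite (_ : _ * w ^+ m / _ = eps ^+ 2 * expR (2 * m.+1%:R)
               * (W * coherent_radius a ^+ m / Num.sqrt m`!%:R)); last first.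
    by rewrite expRM_natr [expR 2 ^+ _.+1]exprS /w exprMn; ring.
  apply: ler_wpM2l; first by rewrite mulr_ge0 ?sqr_ge0 ?expR_ge0.
  exact: coherent_dominated_superposition psiE m.
case: M => [|M]; first by rewrite big_ord0 sqr_ge0.
rewrite big_ord_recl proj_bs_fock1_0 mulr0 subr0 [adag psi _]/=.
rewrite sqmodE Normc.normc0 expr0n add0r.
have -> : \sum_(i < M) sqmod (err (lift ord0 i)) = sqsum (fun m => err m.+1) M.
  by rewrite /sqsum big_mkord.
apply: le_trans (sqsum_le_expR _ w0 errS M) _.
  by rewrite mulr_ge0 // mulr_ge0 ?sqr_ge0 ?expR_ge0.
rewrite (_ : (_ * eps ^+ 2) ^+ 2 = (eps ^+ 2 * expR 2 * W) ^+ 2 * expR (w ^+ 2) ^+ 2);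
  last by ring.
by rewrite ler_wpM2l ?sqr_ge0 // expr2 ler_peMl ?expR_ge0 // -expR0 ler_expR sqr_ge0.
Qed.

End BeamsplitterApprox.

Section CreationOnCoherent.
Variable R : realType.
Local Notation C := R[i].
Local Notation normc := (@Normc.normc R).

Definition coherent_scale (a : C) : C := (expR (- (sqmod a / 2)))%:C.
Definition sqrt_fact (n : nat) : C := (Num.sqrt n`!%:R)%:C.

Definition dpow (a : C) (n : nat) : C := n%:R * a ^+ n.-1.
Definition pow_taylor_rem (a : C) (t : R) (n : nat) : C :=
  (a + t%:C) ^+ n - a ^+ n - t%:C * dpow a n.

Lemma coherentE a n : coherent a n = coherent_scale a * a ^+ n / sqrt_fact n.
Proof. by []. Qed.

Lemma coherent_scale_neq0 a : coherent_scale a != 0.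
Proof. by rewrite fmorph_eq0 gt_eqF ?expR_gt0. Qed.

Lemma normc_coherent_scale_le1 a : normc (coherent_scale a) <= 1.
Proof.
by rewrite normc_real ger0_norm ?expR_ge0 // expR_le1 oppr_le0 divr_ge0 ?sqmod_ge0.
Qed.

Lemma sqrt_fact_neq0 n : sqrt_fact n != 0.
Proof. by rewrite fmorph_eq0 sqrtr_eq0 -ltNge ltr0n fact_gt0. Qed.

Lemma normc_sqrt_fact n : normc (sqrt_fact n) = Num.sqrt n`!%:R.
Proof. by rewrite normc_real ger0_norm ?sqrtr_ge0. Qed.

Lemma dpowS a n : dpow a n.+1 = a * dpow a n + a ^+ n.
Proof.
by case: n => [|n]; rewrite /dpow ?mul0r ?mulr0 ?add0r ?mul1r // exprS -natr1; ring.
Qed.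

Lemma normc_dpow_le a n : normc (dpow a n) <= n%:R * (normc a + 1) ^+ n.
Proof.
rewrite /dpow Normc.normcM normc_nat normcX ler_wpM2l //.
apply: le_trans (_ : (normc a + 1) ^+ n.-1 <= _).
  by rewrite lerXn2r ?nnegrE ?addr_ge0 ?normc_ge0 // lerDl.
by rewrite ler_weXn2l ?leq_pred // lerDr normc_ge0.
Qed.

Lemma pow_taylor_remS a t n :
  pow_taylor_rem a t n.+1 = (a + t%:C) * pow_taylor_rem a t n + t%:C ^+ 2 * dpow a n.
Proof. by rewrite /pow_taylor_rem dpowS !exprS; ring. Qed.

Lemma normc_pow_taylor_rem_le a t n : 0 <= t -> t <= 1 ->
  normc (pow_taylor_rem a t n) <= t ^+ 2 * n%:R ^+ 2 * (normc a + 1) ^+ n.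
Proof.
move=> t0 t1; set B := normc a + 1.
have B1 : 1 <= B by rewrite lerDr normc_ge0.
have B0 : 0 <= B := le_trans ler01 B1.
have atB : normc (a + t%:C) <= B.
  by apply: le_trans (le_normcD _ _) _; rewrite normc_real ger0_norm // lerD2l.
elim: n => [|n IHn].
  rewrite /pow_taylor_rem /dpow !expr0 subrr mul0r mulr0 subr0 Normc.normc0.
  by rewrite expr0n mulr0 mul0r.
rewrite pow_taylor_remS; apply: le_trans (le_normcD _ _) _.
rewrite Normc.normcM (Normc.normcM (_ ^+ 2)) normcX normc_real ger0_norm //.
apply: le_trans (_ : B * (t ^+ 2 * n%:R ^+ 2 * B ^+ n) + t ^+ 2 * (n%:R * B ^+ n) <= _).
  apply: lerD; first exact: ler_pM (normc_ge0 _) (normc_ge0 _) atB IHn.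
  by rewrite ler_wpM2l ?sqr_ge0 // normc_dpow_le.
have -> : t ^+ 2 * n.+1%:R ^+ 2 * B ^+ n.+1 = B * (t ^+ 2 * n%:R ^+ 2 * B ^+ n)
    + t ^+ 2 * (n%:R * B ^+ n.+1 + (n%:R + 1) * B ^+ n.+1).
  by rewrite -natr1 [B ^+ n.+1]exprS; ring.
rewrite lerD2l ler_wpM2l ?sqr_ge0 // (le_trans (_ : _ <= n%:R * B ^+ n.+1)) //.
  by rewrite ler_wpM2l // exprS ler_peMl ?exprn_ge0.
by rewrite lerDl mulr_ge0 ?exprn_ge0.
Qed.

End CreationOnCoherent.

Section CreationWitness.
Variable R : realType.
Local Notation C := R[i].
Local Notation normc := (@Normc.normc R).

Lemma adag_coherent (a : C) n :
  adag (coherent a) n = coherent_scale a * dpow a n / sqrt_fact R n.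
Proof.
case: n => [|m]; first by rewrite /dpow mul0r mulr0 mul0r.
rewrite /adag coherentE /dpow /sqrt_fact factS natrM sqrtrM // rmorphM /=.
set r := (Num.sqrt m.+1%:R)%:C.
have -> : m.+1%:R = r ^+ 2 by rewrite -rmorphXn sqr_sqrtr // rmorph_nat.
have r0 : r != 0 by rewrite fmorph_eq0 sqrtr_eq0 -ltNge.
by field; rewrite r0 sqrt_fact_neq0.
Qed.

Lemma adag_superposition k (c a : 'I_k -> C) (psi : nat -> C) :
  (forall n, psi n = \sum_(i < k) c i * coherent (a i) n) ->
  forall n, adag psi n = \sum_(i < k) c i * adag (coherent (a i)) n.
Proof.
move=> psiE [|n]; first by rewrite big1 // => i _; rewrite mulr0.
by rewrite /adag psiE mulr_sumr; apply: eq_bigr => i _; rewrite mulrCA.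
Qed.

(* [a^dag psi] with the derivative in the amplitudes replaced by a difference
   quotient of step [t]. *)
Definition adag_witness k (c a : 'I_k -> C) (t : R) (n : nat) : C :=
  \sum_i c i * coherent_scale (a i) / (t%:C * coherent_scale (a i + t%:C))
           * coherent (a i + t%:C) n
  - \sum_i c i / t%:C * coherent (a i) n.

Lemma adag_witness_rank k (c a : 'I_k -> C) t :
  has_coherent_rank (2 * k) (adag_witness c a t).
Proof.
rewrite mul2n -addnn.
exists (fun i => match fintype.split i with
        | inl j => c j * coherent_scale (a j) / (t%:C * coherent_scale (a j + t%:C))
        | inr j => - (c j / t%:C) end).
exists (fun i => match fintype.split i with inl j => a j + t%:C | inr j => a j end).
move=> n; rewrite big_split_ord /adag_witness -sumrN; congr (_ + _).
  by apply: eq_bigr => j _; rewrite (unsplitK (inl j)).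
by apply: eq_bigr => j _; rewrite (unsplitK (inr j)) mulNr.
Qed.

Lemma adag_sub_witness k (c a : 'I_k -> C) (psi : nat -> C) t :
  (forall n, psi n = \sum_(i < k) c i * coherent (a i) n) -> t != 0 ->
  forall n, adag psi n - adag_witness c a t n
    = - \sum_j c j * coherent_scale (a j) / (t%:C * sqrt_fact R n)
            * pow_taylor_rem (a j) t n.
Proof.
move=> psiE t0 n; rewrite (adag_superposition psiE) /adag_witness opprB addrA.
rewrite -big_split -sumrB -sumrN /=; apply: eq_bigr => j _.
rewrite adag_coherent !coherentE /pow_taylor_rem.
have tC : t%:C != 0 by rewrite fmorph_eq0.
by field; rewrite tC sqrt_fact_neq0 coherent_scale_neq0.
Qed.

Lemma adag_dominated k (c a : 'I_k -> C) (psi : nat -> C) :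
  (forall n, psi n = \sum_(i < k) c i * coherent (a i) n) ->
  coherent_dominated (coherent_weight c) (2 * coherent_radius a) (adag psi).
Proof.
move=> psiE n; rewrite (adag_superposition psiE); apply: le_trans (normc_sum_le _ _ _) _.
rewrite /coherent_weight !mulr_suml; apply: ler_sum => i _.
rewrite adag_coherent Normc.normcM Normc.normcM (Normc.normcM (coherent_scale _)).
rewrite Normc.normcV normc_sqrt_fact -[leRHS]mulrA ler_wpM2l ?normc_ge0 //.
rewrite ler_wpM2r ?invr_ge0 ?sqrtr_ge0 //.
apply: le_trans (_ : 1 * normc (dpow (a i) n) <= _).
  by rewrite ler_wpM2r ?normc_ge0 ?normc_coherent_scale_le1.
rewrite mul1r; apply: le_trans (normc_dpow_le _ _) _.
rewrite exprMn ler_pM ?exprn_ge0 ?addr_ge0 ?normc_ge0 //.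
  by rewrite -natrX ler_nat ltnW // ltn_expl.
by rewrite lerXn2r ?nnegrE ?coherent_radius_ge0 ?addr_ge0 ?normc_ge0 // normc_add1_le_radius.
Qed.

Lemma adag_sub_witness_dominated k (c a : 'I_k -> C) (psi : nat -> C) t :
  (forall n, psi n = \sum_(i < k) c i * coherent (a i) n) -> 0 < t -> t <= 1 ->
  coherent_dominated (t * coherent_weight c) (4 * coherent_radius a)
    (fun n => adag psi n - adag_witness c a t n).
Proof.
move=> psiE t0 t1 n; rewrite (adag_sub_witness psiE (lt0r_neq0 t0)) normcN.
apply: le_trans (normc_sum_le _ _ _) _.
set s := Num.sqrt n`!%:R.
have s0 : 0 < s by rewrite sqrtr_gt0 ltr0n fact_gt0.
have [t0' s0'] := (ltW t0, ltW s0).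
have -> : t * coherent_weight c * (4 * coherent_radius a) ^+ n / s
          = \sum_i normc (c i) * (t * (4 * coherent_radius a) ^+ n / s).
  by rewrite /coherent_weight [t * _]mulrC !mulr_suml; apply: eq_bigr => i _; ring.
apply: ler_sum => i _; set B := normc (a i) + 1.
rewrite Normc.normcM Normc.normcM Normc.normcM Normc.normcV Normc.normcM.
rewrite normc_real normc_sqrt_fact -/s ger0_norm // -!mulrA ler_wpM2l ?normc_ge0 //.
apply: le_trans (_ : 1 * ((t * s)^-1 * (t ^+ 2 * n%:R ^+ 2 * B ^+ n)) <= _).
  have ts0 : 0 <= (t * s)^-1 by rewrite invr_ge0 mulr_ge0.
  apply: ler_pM; rewrite ?normc_ge0 ?normc_coherent_scale_le1 ?mulr_ge0 ?normc_ge0 //.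
  by rewrite ler_wpM2l // normc_pow_taylor_rem_le.
rewrite (_ : 1 * _ = t * (n%:R ^+ 2 * B ^+ n) / s); last by field; rewrite !gt_eqF.
rewrite [leRHS]mulrA ler_wpM2r ?invr_ge0 // ler_wpM2l // exprMn.
rewrite ler_pM ?sqr_ge0 ?exprn_ge0 ?addr_ge0 ?normc_ge0 //.
  rewrite -!natrX ler_nat (_ : 4 = 2 ^ 2)%N // -expnM mulnC expnM.
  by rewrite leq_sqr ltnW // ltn_expl.
by rewrite lerXn2r ?nnegrE ?coherent_radius_ge0 ?addr_ge0 ?normc_ge0 // normc_add1_le_radius.
Qed.

End CreationWitness.

Lemma adag_approx_coherent_rank (R : realType) k (psi : nat -> R[i]) :
  has_coherent_rank k psi -> (exists n, psi n != 0) ->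
  approx_coherent_rank_le (2 * k) (adag psi).
Proof.
move=> [c [a psiE]] [n0 psin0] delta delta0.
have W0 := coherent_weight_ge0 c; have A0 := coherent_radius_ge0 a.
have [cvphi _] := cvg_sqsum_expR W0 (mulr_ge0 (ler0n _ 2) A0) (adag_dominated psiE).
have P0 : 0 < sqnorm (adag psi).
  apply: lt_le_trans (sqmod_gt0 (_ : adag psi n0.+1 != 0)) _.
    by rewrite mulf_neq0 // fmorph_eq0 sqrtr_eq0 -ltNge ltr0n.
  apply: le_trans (sqsum_le_sqnorm n0.+2 cvphi).
  by rewrite /sqsum big_nat_recr //= lerDr sumr_ge0 // => n _; rewrite sqmod_ge0.
set e := Num.min 4^-1 (delta / 4).
have e0 : 0 < e by rewrite lt_min invr_gt0 ?divr_gt0 ?ltr0n.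
have e4 : e <= 4^-1 by rewrite ge_min lexx.
set X := coherent_weight c ^+ 2 * expR ((4 * coherent_radius a) ^+ 2).
have X0 : 0 <= X by rewrite mulr_ge0 ?sqr_ge0 ?expR_ge0.
set t := Num.min 1 (e * sqnorm (adag psi) / (X + 1)).
have t0 : 0 < t by rewrite lt_min ltr01 !divr_gt0 ?mulr_gt0 // ltr_wpDl.
have t1 : t <= 1 by rewrite ge_min lexx.
have tX : t ^+ 2 * X <= e * sqnorm (adag psi).
  apply: le_trans (_ : t * X <= _).
    by rewrite expr2 -mulrA ler_piMl // mulr_ge0 // ltW.
  apply: le_trans (_ : e * sqnorm (adag psi) / (X + 1) * X <= _).
    by rewrite ler_wpM2r // ge_min lexx orbT.
  by rewrite mulrAC ler_pdivrMr ?ltr_wpDl // ler_wpM2l ?lerDl // mulr_ge0 // ltW.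
exists (adag_witness c a t); split; first exact: adag_witness_rank.
have [cvd dle] := cvg_sqsum_expR (mulr_ge0 (ltW t0) W0) (mulr_ge0 (ler0n _ 4) A0)
  (adag_sub_witness_dominated psiE t0 t1).
apply: le_lt_trans (fidelity_gt e0 e4 cvphi cvd P0 _).
  by rewrite lerD2l lerN2 -ler_pdivlMl // mulrC ge_min lexx orbT.
by apply: le_trans dle _; rewrite exprMn -mulrA.
Qed.

Theorem proposition5 (R : realType) (k : nat) (psi : nat -> R[i]) :
  has_coherent_rank k psi ->
  (exists n, psi n != 0) ->
  (exists (K d : R), 0 < d /\
     forall eps : R, eps != 0 -> `|eps| < d ->
       forall M : nat,
         \sum_(n < M)
            sqmod (adag psi n
                   - (eps^-1)%:C *
                       proj_aux_vac (beamsplitter (2 * eps) (tensor_fock1 psi)) n)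
         <= (K * eps ^+ 2) ^+ 2)
  /\ approx_coherent_rank_le (2 * k)%N (adag psi).
Proof.
move=> rank_psi psi_neq0; split.
  exact: adag_beamsplitter_approx rank_psi.
exact: adag_approx_coherent_rank rank_psi psi_neq0.
Qed.
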